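(* Let $G_{\max}=(V,E_{\max})$ be a finite, simple, connected, undirected graph on $N$ nodes and let $\lambda',\mu',\gamma'>0$. Consider the Sum-Dependent Dynamic Bond Percolation (SUD-DBP) process $\{A(t),t\ge 0\}$: the continuous-time Markov process whose state space $\mathcal{A}$ is the set of all $2^{|E_{\max}|}$ subsets $E(\mathbf{A})\subseteq E_{\max}$ of closed edges (equivalently, the symmetric $0/1$ adjacency matrices $\mathbf{A}$ supported on $E_{\max}$), in which only one edge changes state per transition, each closed edge $(a,b)$ opens at rate $\mu'$, and each open edge $(a,b)\in E_{\max}$ closes at rate $\lambda'\gamma'^{\,k_a+k_b}$, where $k_i=\sum_{j=1}^N\mathbf{A}_{ij}$ is the number of closed edges incident to node $i$ in the current state $\mathbf{A}$. Then $\{A(t)\}$ is a reversible Markov process and its equilibrium distribution is \[ \pi(\mathbf{A})=\frac{1}{Z}\left(\frac{\lambda'}{\mu'}\right)^{|E(\mathbf{A})|}\gamma'^{\,g(E(\mathbf{A}))},\qquad \mathbf{A}\in\mathcal{A}, \] where $Z=\sum_{\mathbf{A}\in\mathcal{A}}(\lambda'/\mu')^{|E(\mathbf{A})|}\gamma'^{\,g(E(\mathbf{A}))}$, $|E(\mathbf{A})|=\frac{\mathbf{1}^T\mathbf{A}\mathbf{1}}{2}$ is the number of closed edges, and $g(E(\mathbf{A}))$ is the number of $P_3$ subgraphs (paths on 3 vertices) formed by the closed edges, given by \[ g(E(\mathbf{A}))=\sum_{i=1}^N\sum_{j>i}(\mathbf{A}^2)_{i,j}=\sum_{i=1}^N\binom{k_i}{2}.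 \]
   Context: An edge is ''closed'' if it is present in the current network state and ''open'' otherwise; the network state is the adjacency matrix $\mathbf{A}$ of the graph $(V,E(\mathbf{A}))$ of closed edges. $\mathbf{1}=[1,\dots,1]^T$. A $P_3$ subgraph is a path with 3 distinct vertices and 2 edges. A stationary Markov process is reversible if it is statistically the same run forward and backward in time (equivalently, its equilibrium distribution satisfies detailed balance $\pi(j)q(j,k)=\pi(k)q(k,j)$ for all states $j,k$, with $q$ the transition rates). *)

From HB Require Import structures.
From mathcomp Require Import all_boot all_order all_algebra.
Set Implicit Arguments. Unset Strict Implicit. Unset Printing Implicit Defensive.
Import Order.TTheory GRing.Theory Num.Theory.
Local Open Scope ring_scope.

Definition simple_edges (V : finType) (Emax : {set {set V}}) : Prop :=
  forall e, e \in Emax -> #|e| = 2%N.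

Definition gadj (V : finType) (Emax : {set {set V}}) : rel V :=
  fun x y => [set x; y] \in Emax.

Definition connected_graph (V : finType) (Emax : {set {set V}}) : Prop :=
  forall x y : V, connect (gadj Emax) x y.

(* A network state is a set S of closed edges, S \subset Emax. *)
Definition deg (V : finType) (S : {set {set V}}) (a : V) : nat :=
  #|[set e in S | a \in e]|.

(* number of P_3 subgraphs formed by the closed edges: unordered pairs of
   distinct closed edges sharing exactly one vertex (3 vertices in total). *)
Definition P3count (V : finType) (S : {set {set V}}) : nat :=
  #|[set p : {set {set V}} | (p \subset S) && (#|p| == 2%N) &&
       (#|\bigcup_(e in p) e| == 3%N)]|.

Definition sud_rate (R : realFieldType) (lam mu gam : R) (V : finType)
    (Emax : {set {set V}}) (S S' : {set {set V}}) : R :=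
  \sum_(e in Emax | (e \notin S) && (S' == e |: S))
      lam * gam ^+ (\sum_(a in e) deg S a)
  + \sum_(e in Emax | (e \in S) && (S' == S :\ e)) mu.

Definition sud_weight (R : realFieldType) (lam mu gam : R) (V : finType)
    (S : {set {set V}}) : R :=
  (lam / mu) ^+ #|S| * gam ^+ P3count S.

Definition sud_Z (R : realFieldType) (lam mu gam : R) (V : finType)
    (Emax : {set {set V}}) : R :=
  \sum_(S : {set {set V}} | S \subset Emax) sud_weight lam mu gam S.

Definition sud_pi (R : realFieldType) (lam mu gam : R) (V : finType)
    (Emax : {set {set V}}) (S : {set {set V}}) : R :=
  sud_weight lam mu gam S / sud_Z lam mu gam Emax.

Definition stationary (R : realFieldType) (V : finType) (Emax : {set {set V}})
    (q : {set {set V}} -> {set {set V}} -> R) (p : {set {set V}} -> R) : Prop :=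
  forall S : {set {set V}}, S \subset Emax ->
    \sum_(S' : {set {set V}} | S' \subset Emax) p S' * q S' S
    = p S * \sum_(S' : {set {set V}} | S' \subset Emax) q S S'.

Definition is_distribution (R : realFieldType) (V : finType)
    (Emax : {set {set V}}) (p : {set {set V}} -> R) : Prop :=
  (forall S : {set {set V}}, S \subset Emax -> 0 <= p S) /\
  \sum_(S : {set {set V}} | S \subset Emax) p S = 1.

Definition detailed_balance (R : realFieldType) (V : finType)
    (Emax : {set {set V}}) (q : {set {set V}} -> {set {set V}} -> R)
    (p : {set {set V}} -> R) : Prop :=
  forall S S' : {set {set V}}, S \subset Emax -> S' \subset Emax -> p S * q S S' = p S' * q S' S.

From HB Require Import structures.
From mathcomp Require Import all_boot all_order all_algebra.
From mathcomp Require Import ring.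

Set Implicit Arguments.
Unset Strict Implicit.
Unset Printing Implicit Defensive.
Import Order.TTheory GRing.Theory Num.Theory.

(* Closing the edge e = {a, b} creates exactly k_a + k_b new P_3's, so the
   weight w(S) = (lam/mu)^|S| gam^g(S) grows by (lam/mu) gam^(k_a + k_b) when
   e is added; this is the ratio of the closing rate to the opening rate mu,
   which is detailed balance.  For uniqueness, divide a stationary p by w: at a
   state where p/w is maximal, global balance together with detailed balance
   for w forces p/w to be equal at every neighbour, and any two states are
   joined by single-edge flips through the empty state. *)

Lemma double_counting (I J : finType) (P : I -> J -> bool) :
  (\sum_i #|[set j | P i j]| = \sum_j #|[set i | P i j]|)%N.
Proof.
have cardE (K : finType) (Q : pred K) : #|[set k | Q k]| = (\sum_k Q k)%N.
  by rewrite -sum1dep_card big_mkcond; apply: eq_bigr => k _; case: (Q k).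
under eq_bigr do rewrite cardE.
by rewrite exchange_big; apply: eq_bigr => j _; rewrite cardE.
Qed.

Lemma card2_setU_eq3 (V : finType) (e f : {set V}) :
  #|e| = 2 -> #|f| = 2 -> e != f -> (#|e :|: f| == 3 : nat) = #|e :&: f|.
Proof.
move=> e2 f2 nef.
have ef_le1 : #|e :&: f| <= 1.
  rewrite leqNgt; apply/negP => ef2.
  have /eqP efe : e :&: f == e by rewrite eqEcard subsetIl e2.
  by move: nef; rewrite eqEcard -{1}efe subsetIr e2 f2.
by rewrite cardsU e2 f2; move: ef_le1; case: #|e :&: f| => [|[|]].
Qed.

Lemma P3count_deg (V : finType) (S : {set {set V}}) :
  (forall e, e \in S -> #|e| = 2) -> P3count S = (\sum_a 'C(deg S a, 2))%N.
Proof.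
move=> S2; pose star a := [set e in S | a \in e].
pose P3 (p : {set {set V}}) := (p \subset S) && (#|p| == 2).
have P3_center p : P3 p ->
    (#|\bigcup_(e in p) e| == 3 : nat) = #|[set a | p \subset star a]|.
  case/andP=> pS /cards2P[e [f [nef pef]]]; subst p.
  move: pS; rewrite subUset !sub1set => /andP[eS fS].
  have -> : \bigcup_(x in [set e; f]) x = e :|: f.
    by rewrite big_setU1 ?inE // big_set1.
  have -> : [set a | [set e; f] \subset star a] = e :&: f.
    by apply/setP => a; rewrite !inE subUset !sub1set !inE eS fS.
  exact: card2_setU_eq3 (S2 _ eS) (S2 _ fS) nef.
transitivity (\sum_p #|[set a | P3 p && (p \subset star a)]|)%N.
  rewrite /P3count -sum1dep_card big_mkcond /=; apply: eq_bigr => p _.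
  rewrite -/(P3 p); case: (boolP (P3 p)) => [/P3_center <-|_] /=.
    by case: (_ == 3).
  by apply/esym/eqP; rewrite cards_eq0; apply/eqP/setP => a; rewrite !inE.
rewrite (double_counting (fun p a => P3 p && (p \subset star a))); apply: eq_bigr => a _.
have starS : star a \subset S by apply/subsetP => e; rewrite inE => /andP[].
rewrite -cards_draws; apply: eq_card => p; rewrite !inE /P3.
rewrite -/(star a) andbAC.
by case: (boolP (p \subset star a)) => [pa|]; rewrite ?andbF ?(subset_trans pa starS).
Qed.

Lemma deg_setU1 (V : finType) (S : {set {set V}}) (e : {set V}) (a : V) :
  e \notin S -> deg (e |: S) a = (deg S a + (a \in e))%N.
Proof.
move=> eS; rewrite /deg; case: (boolP (a \in e)) => ae.
  have -> : [set x in e |: S | a \in x] = e |: [set x in S | a \in x].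
    by apply/setP => x; rewrite !inE; case: (eqVneq x e) => // ->; rewrite ae.
  by rewrite cardsU1 inE (negbTE eS) addn1.
have -> : [set x in e |: S | a \in x] = [set x in S | a \in x].
  by apply/setP => x; rewrite !inE; case: (eqVneq x e) => // ->; rewrite (negbTE ae) !andbF.
by rewrite /= addn0.
Qed.

Lemma P3count_setU1 (V : finType) (S : {set {set V}}) (e : {set V}) :
  (forall f, f \in S -> #|f| = 2) -> #|e| = 2 -> e \notin S ->
  P3count (e |: S) = (P3count S + \sum_(a in e) deg S a)%N.
Proof.
move=> S2 e2 eS.
have eS2 f : f \in e |: S -> #|f| = 2 by rewrite in_setU1 => /orP[/eqP->|/S2].
rewrite !P3count_deg // [X in (_ + X)%N]big_mkcond -big_split /=.
apply: eq_bigr => a _; rewrite deg_setU1 //.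
by case: (a \in e); rewrite ?addn0 // addn1 binS bin1.
Qed.

Local Open Scope ring_scope.

Section SudRates.
Variables (R : realFieldType) (lam mu gam : R) (V : finType) (Emax : {set {set V}}).
Notation q := (sud_rate lam mu gam Emax).
Notation w := (@sud_weight R lam mu gam V).

Definition adds_edge (S S' : {set {set V}}) : bool :=
  [exists e in Emax, (e \notin S) && (S' == e |: S)].

Lemma sud_rate_setU1 (S : {set {set V}}) (e : {set V}) :
  e \in Emax -> e \notin S -> q S (e |: S) = lam * gam ^+ (\sum_(a in e) deg S a).
Proof.
move=> eE eS; rewrite /sud_rate [X in _ + X]big1 ?addr0; last first.
  by move=> f /andP[_ /andP[fS /eqP/setP/(_ f)]]; rewrite setD11 in_setU1 fS orbT.
rewrite (big_pred1 e) // => f /=.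
case: (eqVneq f e) => [->|nfe]; first by rewrite eE eS eqxx.
apply/negbTE/negP => /and3P[_ fS /eqP/setP/(_ f)].
by rewrite setU11 in_setU1 (negbTE nfe) (negbTE fS).
Qed.

Lemma sud_rate_setD1 (S : {set {set V}}) (e : {set V}) :
  S \subset Emax -> e \in S -> q S (S :\ e) = mu.
Proof.
move=> SE eS; rewrite /sud_rate big1 ?add0r; last first.
  by move=> f /andP[_ /andP[fS /eqP/setP/(_ f)]]; rewrite setU11 in_setD1 (negbTE fS) andbF.
rewrite (big_pred1 e) // => f /=.
case: (eqVneq f e) => [->|nfe]; first by rewrite (subsetP SE _ eS) eS eqxx.
apply/negbTE/negP => /and3P[_ fS /eqP/setP/(_ e)].
by rewrite setD11 in_setD1 eq_sym nfe eS.
Qed.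

Lemma sud_rate_eq0 (S S' : {set {set V}}) : S \subset Emax ->
  ~~ adds_edge S S' -> ~~ adds_edge S' S -> q S S' = 0.
Proof.
move=> SE addSS' addS'S; rewrite /sud_rate !big1 ?addr0 //.
  move=> f /and3P[_ fS /eqP S'E]; case/negP: addS'S; apply/exists_inP.
  by exists f; [apply: (subsetP SE) | rewrite S'E setD11 (setD1K fS) eqxx].
move=> f /and3P[fE fS /eqP S'E]; case/negP: addSS'; apply/exists_inP.
by exists f; rewrite // fS S'E eqxx.
Qed.

Hypotheses (lam_gt0 : 0 < lam) (mu_gt0 : 0 < mu) (gam_gt0 : 0 < gam).

Lemma sud_rate_ge0 (S S' : {set {set V}}) : 0 <= q S S'.
Proof.
by rewrite addr_ge0 ?sumr_ge0 // => *; rewrite ?mulr_ge0 ?exprn_ge0 ?ltW.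
Qed.

Lemma sud_weight_gt0 (S : {set {set V}}) : 0 < w S.
Proof. by rewrite mulr_gt0 ?exprn_gt0 ?divr_gt0. Qed.

Lemma sud_rate_setU1_gt0 (S : {set {set V}}) (e : {set V}) :
  e \in Emax -> e \notin S -> 0 < q S (e |: S).
Proof. by move=> eE eS; rewrite sud_rate_setU1 // mulr_gt0 ?exprn_gt0. Qed.

Hypothesis Emax2 : simple_edges Emax.

Lemma sud_weight_setU1 (S : {set {set V}}) (e : {set V}) :
  S \subset Emax -> e \in Emax -> e \notin S ->
  w (e |: S) = w S * (lam / mu) * gam ^+ (\sum_(a in e) deg S a).
Proof.
move=> SE eE eS.
have S2 f : f \in S -> #|f| = 2%N by move=> fS; apply/Emax2/(subsetP SE).
rewrite /sud_weight (P3count_setU1 S2 (Emax2 eE) eS) cardsU1 eS exprS exprD.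
by move: (lam / mu) (gam ^+ _) (gam ^+ _) => x A B; rewrite -!mulrA mulrCA (mulrCA x).
Qed.

Lemma sud_detailed_balance_setU1 (S : {set {set V}}) (e : {set V}) :
  S \subset Emax -> e \in Emax -> e \notin S ->
  w S * q S (e |: S) = w (e |: S) * q (e |: S) S.
Proof.
move=> SE eE eS.
have eSE : e |: S \subset Emax by rewrite subUset sub1set eE.
have := sud_rate_setD1 eSE (setU11 e S); rewrite setU1K // => ->.
rewrite sud_rate_setU1 // sud_weight_setU1 // -!mulrA; congr (_ * _).
by rewrite [_ * mu]mulrC mulKf ?gt_eqF.
Qed.

Lemma sud_detailed_balance : detailed_balance Emax q w.
Proof.
move=> S S' SE S'E.
case: (boolP (adds_edge S S')) => [/exists_inP[e eE /andP[eS /eqP->]]|nSS'].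
  exact: sud_detailed_balance_setU1.
case: (boolP (adds_edge S' S)) => [/exists_inP[e eE /andP[eS' /eqP->]]|nS'S].
  exact/esym/sud_detailed_balance_setU1.
by rewrite !sud_rate_eq0 ?mulr0.
Qed.

End SudRates.

Section Reversible.
Variables (R : realFieldType) (V : finType) (Emax : {set {set V}}).
Variable q : {set {set V}} -> {set {set V}} -> R.
Implicit Types (S T : {set {set V}}) (p : {set {set V}} -> R).

Lemma detailed_balance_stationary p :
  detailed_balance Emax q p -> stationary Emax q p.
Proof. by move=> db S SE; rewrite mulr_sumr; apply: eq_bigr => T TE; rewrite db. Qed.

Variable w : {set {set V}} -> R.
Hypotheses (q_ge0 : forall S T, 0 <= q S T) (w_gt0 : forall S, 0 < w S).
Hypothesis w_db : detailed_balance Emax q w.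

Hypotheses (q_setD1_gt0 : forall S e, S \subset Emax -> e \in S -> 0 < q S (S :\ e))
  (q_setU1_gt0 : forall S e, e \in Emax -> e \notin S -> 0 < q S (e |: S)).

Section Stationary.
Variable p : {set {set V}} -> R.
Hypothesis p_stat : stationary Emax q p.
Let r S := p S / w S.

(* Global balance at S, rewritten with detailed balance for w, says that
   sum_T q(S,T) (r S - r T) = 0; at a maximum of r every term is >= 0. *)
Lemma stationary_ratio_max_step S T : S \subset Emax -> T \subset Emax ->
  (forall T', T' \subset Emax -> r T' <= r S) -> 0 < q S T -> r T = r S.
Proof.
move=> SE TE r_max qST.
have pE (U : {set {set V}}) : p U = r U * w U by rewrite /r divfK ?gt_eqF.
have balance0 : \sum_(U : {set {set V}} | U \subset Emax) q S U * (r S - r U) = 0.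
  have wS_neq0 : w S != 0 by rewrite gt_eqF.
  apply: (mulfI wS_neq0); rewrite mulr0 mulr_sumr.
  transitivity (p S * \sum_(U : {set {set V}} | U \subset Emax) q S U
                - \sum_(U : {set {set V}} | U \subset Emax) p U * q U S); last first.
    by rewrite p_stat // subrr.
  rewrite mulr_sumr -sumrB; apply: eq_bigr => U UE.
  rewrite (pE U) (pE S) -[r U * w U * _]mulrA -w_db //; ring.
have term_ge0 (U : {set {set V}}) : U \subset Emax -> 0 <= q S U * (r S - r U).
  by move=> UE; rewrite mulr_ge0 ?subr_ge0 ?r_max.
move/eqP: (psumr_eq0P term_ge0 balance0 TE).
by rewrite mulf_eq0 subr_eq0 (gt_eqF qST) => /eqP.
Qed.

Lemma stationary_ratio_const : exists c, forall S, S \subset Emax -> p S = c * w S.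
Proof.
have [M ME M_max] := @arg_maxP _ R _ set0 (fun S => S \subset Emax) r (sub0set _).
pose is_max S := S \subset Emax /\ r S = r M.
have max_step S T : is_max S -> T \subset Emax -> 0 < q S T -> is_max T.
  move=> [SE rS] TE qST; split=> //; rewrite -rS.
  by apply: stationary_ratio_max_step => // T' T'E; rewrite rS; apply: M_max.
have max_set0 n S : #|S| = n -> is_max S -> is_max set0.
  elim: n S => [|n IHn] S cardS maxS; first by rewrite -(cards0_eq cardS).
  have /card_gt0P[e eS] : (0 < #|S|)%N by rewrite cardS.
  apply: (IHn (S :\ e)); first by move: cardS; rewrite (cardsD1 e) eS => -[].
  have SeE := subset_trans (subD1set S e) maxS.1.
  exact: max_step maxS SeE (q_setD1_gt0 maxS.1 eS).
have max0 : is_max set0 by apply: (max_set0 _ M erefl); split.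
have max_all n S : #|S| = n -> S \subset Emax -> is_max S.
  elim: n S => [|n IHn] S cardS SE; first by rewrite (cards0_eq cardS).
  have /card_gt0P[e eS] : (0 < #|S|)%N by rewrite cardS.
  have maxSe : is_max (S :\ e).
    apply: IHn; last exact: subset_trans (subD1set S e) SE.
    by move: cardS; rewrite (cardsD1 e) eS => -[].
  rewrite -(setD1K eS); apply: max_step maxSe _ _; first by rewrite setD1K.
  by apply: q_setU1_gt0; rewrite ?setD11 ?(subsetP SE).
exists (r M) => S SE; have [_ <-] := max_all _ S erefl SE.
by rewrite /r divfK ?gt_eqF.
Qed.

End Stationary.

Lemma detailed_balance_divr (c : R) :
  detailed_balance Emax q (fun S => w S / c).
Proof. by move=> S T SE TE; rewrite mulrAC [RHS]mulrAC w_db. Qed.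

Lemma weight_sum_gt0 : 0 < \sum_(S : {set {set V}} | S \subset Emax) w S.
Proof. by rewrite (bigD1 set0) ?sub0set //= ltr_wpDr ?sumr_ge0 // => S _; apply: ltW. Qed.

Lemma normalized_weight_distribution :
  is_distribution Emax (fun S => w S / \sum_(T : {set {set V}} | T \subset Emax) w T).
Proof.
split=> [S _|]; first by rewrite ltW ?divr_gt0 ?weight_sum_gt0.
by rewrite -mulr_suml mulfV ?gt_eqF ?weight_sum_gt0.
Qed.

Lemma stationary_distribution_unique p :
  is_distribution Emax p -> stationary Emax q p ->
  forall S, S \subset Emax -> p S = w S / \sum_(T : {set {set V}} | T \subset Emax) w T.
Proof.
move=> [_ p_sum1] p_stat; have [c pE] := stationary_ratio_const p_stat.
have Z_neq0 : \sum_(T : {set {set V}} | T \subset Emax) w T != 0.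
  by rewrite gt_eqF ?weight_sum_gt0.
have c_def : c = (\sum_(T : {set {set V}} | T \subset Emax) w T)^-1.
  apply: (mulIf Z_neq0); rewrite mulVf //.
  by rewrite -p_sum1 mulr_sumr; apply: eq_bigr => T TE; rewrite pE.
by move=> S SE; rewrite pE // c_def mulrC.
Qed.

End Reversible.

Theorem theorem2 (R : realFieldType) (V : finType) (Emax : {set {set V}})
    (lam mu gam : R) :
  simple_edges Emax -> connected_graph Emax ->
  0 < lam -> 0 < mu -> 0 < gam ->
  let q := sud_rate lam mu gam Emax in
  let pi := sud_pi lam mu gam Emax in
  [/\ (* g(E(A)) = sum_i binom(k_i, 2) *)
      (forall S : {set {set V}}, S \subset Emax ->
         P3count S = (\sum_(a : V) 'C(deg S a, 2))%N),
      (* pi is a probability distribution with positive mass everywhere *)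
      is_distribution Emax pi /\ (forall S : {set {set V}}, S \subset Emax -> 0 < pi S),
      (* pi is an equilibrium distribution *)
      stationary Emax q pi,
      (* it is the unique equilibrium distribution *)
      (forall p, is_distribution Emax p -> stationary Emax q p ->
         forall S : {set {set V}}, S \subset Emax -> p S = pi S)
    & (* reversibility: detailed balance *)
      detailed_balance Emax q pi].
Proof.
move=> Emax2 _ lam_gt0 mu_gt0 gam_gt0 q pi.
pose w := @sud_weight R lam mu gam V.
have q_ge0 : forall S S', 0 <= q S S' := sud_rate_ge0 Emax lam_gt0 mu_gt0 gam_gt0.
have w_gt0 : forall S, 0 < w S := sud_weight_gt0 lam_gt0 mu_gt0 gam_gt0.
have w_db : detailed_balance Emax q w := sud_detailed_balance lam gam mu_gt0 Emax2.
have q_setD1_gt0 (S : {set {set V}}) e : S \subset Emax -> e \in S -> 0 < q S (S :\ e).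
  by move=> SE eS; rewrite /q sud_rate_setD1.
have q_setU1_gt0 (S : {set {set V}}) e : e \in Emax -> e \notin S -> 0 < q S (e |: S).
  exact: sud_rate_setU1_gt0.
have pi_db : detailed_balance Emax q pi := detailed_balance_divr w_db _.
split.
- by move=> S SE; apply: P3count_deg => e eS; apply/Emax2/(subsetP SE).
- split; first exact: normalized_weight_distribution.
  by move=> S _; rewrite divr_gt0 ?(weight_sum_gt0 Emax w_gt0).
- exact: detailed_balance_stationary.
- exact: stationary_distribution_unique.
- exact: pi_db.
Qed.
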